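(* Let $M$ be a magma satisfying $(xy)z = xz$ and $x(yz) = xz$ for all $x,y,z\in M$. Then $M$ satisfies $xy = xz$ and $(xy)z = xy$ for all $x,y,z\in M$ if and only if $M$ avoids the $2$-element right zero band $2_{RZ}$ on $\{0,1\}$ with Cayley table \[ \begin{array}{c|cc} 2_{RZ} & 0 & 1 \\ \hline 0 & 0 & 1 \\ 1 & 0 & 1 \end{array}. \]
   Context: A magma is a nonempty set with a binary operation, written by juxtaposition. A magma $M$ avoids a magma $F$ if no submagma of $M$ is isomorphic to $F$. *)

(* A magma is a type T (nonempty) with op : T -> T -> T. *)

(* The 2-element right zero band 2_RZ on {0,1} (0 = false, 1 = true): x y = y. *)
Definition rz2_op (a b : bool) : bool := b.

Definition submagma {T : Type} (op : T -> T -> T) (S : T -> Prop) : Prop :=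
  (exists x, S x) /\ (forall x y, S x -> S y -> S (op x y)).

Definition iso_to_RZ2 {T : Type} (op : T -> T -> T) (S : T -> Prop) : Prop :=
  exists f : bool -> T,
    (forall b, S (f b)) /\
    (forall x, S x -> exists! b, f b = x) /\
    (forall a b, f (rz2_op a b) = op (f a) (f b)).

Definition avoids_RZ2 {T : Type} (op : T -> T -> T) : Prop :=
  ~ (exists S : T -> Prop, submagma op S /\ iso_to_RZ2 op S).

(* Under the laws (xy)z = xz and x(yz) = xz, any two products xy, xz with the
   same left factor satisfy (xy)(xz) = xz, so each row {xy | y in M} is a right
   zero band. A copy of 2_RZ is exactly a pair a <> b with aa = a, ab = b,
   ba = a, bb = b. Hence M avoids 2_RZ iff every row is a single element,
   i.e. xy = xz; and then (xy)z = xz = xy. *)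

From Stdlib Require Import Classical.

Definition right_zero_pair {T : Type} (op : T -> T -> T) (a b : T) : Prop :=
  op a a = a /\ op a b = b /\ op b a = a /\ op b b = b.

Section RightZeroCopies.

Variables (T : Type) (op : T -> T -> T).

Lemma iso_to_RZ2_pair (S : T -> Prop) :
  iso_to_RZ2 op S -> exists a b, a <> b /\ right_zero_pair op a b.
Proof.
  intros [f [Sf [Uf Hf]]].
  exists (f false), (f true); split.
  - intros Heq.
    destruct (Uf (f false) (Sf false)) as [c [_ Hc]].
    assert (c = true) by (apply Hc; symmetry; exact Heq).
    assert (c = false) by (apply Hc; reflexivity).
    congruence.
  - repeat split; symmetry; apply Hf.
Qed.

Lemma pair_submagma (a b : T) :
  right_zero_pair op a b -> submagma op (fun t => t = a \/ t = b).
Proof.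
  intros (Haa & Hab & Hba & Hbb); split.
  - exists a; left; reflexivity.
  - intros x y [-> | ->] [-> | ->]; auto.
Qed.

Lemma pair_iso_to_RZ2 (a b : T) :
  a <> b -> right_zero_pair op a b -> iso_to_RZ2 op (fun t => t = a \/ t = b).
Proof.
  intros Hneq (Haa & Hab & Hba & Hbb).
  exists (fun c : bool => if c then b else a); split; [|split].
  - intros [|]; auto.
  - intros t [-> | ->].
    + exists false; split; [reflexivity|].
      intros [|] Heq; [exfalso; apply Hneq; symmetry; exact Heq | reflexivity].
    + exists true; split; [reflexivity|].
      intros [|] Heq; [reflexivity | exfalso; apply Hneq; exact Heq].
  - intros [|] [|]; simpl; symmetry; assumption.
Qed.

Lemma avoids_RZ2P :
  avoids_RZ2 op <-> (forall a b, right_zero_pair op a b -> a = b).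
Proof.
  split.
  - intros Hav a b Hab.
    apply NNPP; intros Hneq; apply Hav.
    exists (fun t => t = a \/ t = b).
    split; [apply pair_submagma | apply pair_iso_to_RZ2]; assumption.
  - intros Hcollapse [S [_ HS]].
    destruct (iso_to_RZ2_pair S HS) as [a [b [Hneq Hab]]].
    exact (Hneq (Hcollapse a b Hab)).
Qed.

End RightZeroCopies.

Lemma row_right_zero_pair (T : Type) (op : T -> T -> T)
  (H1 : forall x y z, op (op x y) z = op x z)
  (H2 : forall x y z, op x (op y z) = op x z) (x y z : T) :
  right_zero_pair op (op x y) (op x z).
Proof.
  repeat split; rewrite H1, H2; reflexivity.
Qed.

Theorem mainTheorem17 (T : Type) (op : T -> T -> T) (t0 : T)
  (H1 : forall x y z, op (op x y) z = op x z)
  (H2 : forall x y z, op x (op y z) = op x z) :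
  ((forall x y z, op x y = op x z) /\ (forall x y z, op (op x y) z = op x y))
  <-> avoids_RZ2 op.
Proof.
  rewrite avoids_RZ2P; split.
  - intros [Hrow _] a b (Haa & Hab & _).
    rewrite <- Hab, (Hrow a b a), Haa; reflexivity.
  - intros Hcollapse.
    assert (Hrow : forall x y z, op x y = op x z).
    { intros x y z; apply Hcollapse, row_right_zero_pair; assumption. }
    split; [exact Hrow|].
    intros x y z; rewrite H1; apply Hrow.
Qed.
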